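(* Let $n$ be a positive integer and let $G$ be a symmetric pure $(2n)$-sparse gapset of genus $3n+1$ with multiplicity $m$. Then $m+1\in G$.
   Context: A gapset is a finite set $G\subset\mathbb{N}=\{1,2,\dots\}$ such that whenever $z\in G$ and $z=x+y$ with $x,y\in\mathbb{N}$, then $x\in G$ or $y\in G$; its genus is $g=\#G$. Writing $G=\{\ell_1<\dots<\ell_g\}$, multiplicity $m(G)=\min\{s\in\mathbb{N}:s\notin G\}$, Frobenius number $F(G)=\ell_g$; $G$ is symmetric if $F(G)=2g-1$. $G$ is pure $\kappa$-sparse if $\ell_{i+1}-\ell_i\le\kappa$ for all $i$ with equality for some $i$. *)

From mathcomp Require Import all_boot.
Set Implicit Arguments. Unset Strict Implicit. Unset Printing Implicit Defensive.

(* A finite set G of positive integers is represented by a sequence of nats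
   (duplicates and order irrelevant; only membership matters). *)

Definition is_gapset (G : seq nat) : Prop :=
  (forall z, z \in G -> 0 < z) /\
  (forall x y, 0 < x -> 0 < y -> x + y \in G -> (x \in G) || (y \in G)).

Definition gapseq (G : seq nat) : seq nat := sort leq (undup G).

Definition genus (G : seq nat) : nat := size (undup G).

Definition multiplicity (G : seq nat) : nat :=
  head 0 [seq s <- iota 1 (size (undup G)).+1 | s \notin G].

(* Frobenius number F(G) = l_g (largest element; 0 if G is empty) *)
Definition frobenius (G : seq nat) : nat := \max_(x <- G) x.

Definition symmetric_gapset (G : seq nat) : Prop := frobenius G = 2 * genus G - 1.

Definition pure_sparse (kappa : nat) (G : seq nat) : Prop :=
  let l := gapseq G in
  (forall i, i.+1 < size l -> nth 0 l i.+1 - nth 0 l i <= kappa) /\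
  (exists i, i.+1 < size l /\ nth 0 l i.+1 - nth 0 l i = kappa).

From mathcomp Require Import all_boot.
From mathcomp Require Import zify.

(* Let m be the multiplicity and F the Frobenius number.  In a gapset two
   consecutive gaps are at most m apart (otherwise subtracting m from the
   upper one gives a non-gap between them, and non-gaps are closed under
   addition), so pure 2n-sparseness forces m >= 2n.  Symmetry means that for
   0 < x < F exactly one of x, F - x is a gap: at least one is, since their sum
   F is, and the g - 1 gaps below F are spread over only g - 1 such pairs.
   For the gap a preceding F, F - a <= 2n is thus a non-gap, so m <= 2n.
   Hence m = 2n and F = 2g - 1 = m + m + (m + 1), which would be a non-gap
   if m + 1 were one. *)

Section Gapset.

Set Implicit Arguments.
Unset Strict Implicit.

Lemma head_filter_iota (P : pred nat) a k : has P (iota a k) ->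
  let h := head 0 [seq x <- iota a k | P x] in
  [/\ P h, a <= h < a + k & forall j, a <= j < h -> ~~ P j].
Proof.
elim: k a => [//|k IHk] a /=.
case Pa: (P a) => /=; first by move=> _; split=> // [|j]; lia.
move=> /IHk /= [Ph le_h min_h]; split=> // [|j lt_j]; first lia.
have [->|ne_ja] := eqVneq j a; first by rewrite Pa.
by apply: min_h; lia.
Qed.

Lemma count_iota_reflect (P : pred nat) k :
  count (fun y => P (k - y)) (iota 1 k.-1) = count P (iota 1 k.-1).
Proof.
rewrite -(count_map (subn k)); apply/permP; apply: uniq_perm.
- by rewrite map_inj_in_uniq ?iota_uniq // => a b; rewrite !mem_iota; lia.
- exact: iota_uniq.
move=> y; apply/mapP/idP => [[z] | ]; rewrite !mem_iota; first lia.
by move=> y_s; exists (k - y); rewrite ?mem_iota; lia.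
Qed.

Variable G : seq nat.

Lemma frobenius_max x : x \in G -> x <= frobenius G.
Proof. by move=> xG; apply: (leq_bigmax_seq (F := id)). Qed.

Lemma frobenius_mem : G != [::] -> frobenius G \in G.
Proof.
rewrite /frobenius; elim: G => [//|y s IHs] _; rewrite big_cons.
case: s IHs => [|z s] IHs; first by rewrite big_nil maxn0 mem_head.
have {IHs} : \max_(x <- z :: s) x \in z :: s by exact: IHs.
rewrite /maxn; case: ltnP => _ max_s; last exact: mem_head.
by rewrite in_cons max_s orbT.
Qed.

Lemma multiplicityP : let m := multiplicity G in
  [/\ 0 < m, m \notin G & forall j, 0 < j < m -> j \in G].
Proof.
have : has (fun s => s \notin G) (iota 1 (genus G).+1).
  apply/negPn/negP => /hasPn all_in.
  have : size (iota 1 (genus G).+1) <= size (undup G).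
    apply: uniq_leq_size (iota_uniq _ _) _ => x /all_in.
    by rewrite negbK mem_undup.
  by rewrite size_iota ltnn.
move=> /head_filter_iota /=; rewrite /multiplicity -/(genus G).
set m := head 0 _ => -[m_gap le_m min_m]; split=> // [|j lt_j]; first lia.
by apply/negPn/min_m.
Qed.

Lemma genus_count k : {in G, forall x, 0 < x <= k} ->
  genus G = count (mem G) (iota 1 k).
Proof.
move=> G_range; rewrite /genus -size_filter; apply: perm_size.
apply: uniq_perm; [exact: undup_uniq | exact/filter_uniq/iota_uniq |] => x.
rewrite mem_undup mem_filter mem_iota /=.
by case xG: (x \in G) => //=; have := G_range x xG; lia.
Qed.

Lemma mem_gapseq x : (x \in gapseq G) = (x \in G).
Proof. by rewrite mem_sort mem_undup. Qed.

Lemma size_gapseq : size (gapseq G) = genus G.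
Proof. exact: size_sort. Qed.

Lemma nth_gapseq_mem i : i < genus G -> nth 0 (gapseq G) i \in G.
Proof. by move=> lt_i; rewrite -mem_gapseq mem_nth ?size_gapseq. Qed.

Lemma ltn_nth_gapseq i j : i < j -> j < genus G ->
  nth 0 (gapseq G) i < nth 0 (gapseq G) j.
Proof.
have sorted_l : sorted ltn (gapseq G).
  by rewrite ltn_sorted_uniq_leq sort_uniq undup_uniq (sort_sorted leq_total).
move=> lt_ij lt_j; apply: (sorted_ltn_nth ltn_trans) => //;
  rewrite inE size_gapseq //; exact: ltn_trans lt_j.
Qed.

Lemma leq_nth_gapseq i j : i <= j -> j < genus G ->
  nth 0 (gapseq G) i <= nth 0 (gapseq G) j.
Proof.
rewrite leq_eqVlt => /predU1P[-> // | lt_ij] lt_j.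
exact/ltnW/ltn_nth_gapseq.
Qed.

Lemma gapseq_between i x : i.+1 < genus G ->
  nth 0 (gapseq G) i < x < nth 0 (gapseq G) i.+1 -> x \notin G.
Proof.
move=> lt_i lt_x; apply/negP; rewrite -mem_gapseq => xl.
have lt_k : index x (gapseq G) < genus G by rewrite -size_gapseq index_mem.
have nth_k := nth_index 0 xl.
case: (leqP (index x (gapseq G)) i) => [le_ki | lt_ik].
  by have := leq_nth_gapseq le_ki (ltnW lt_i); rewrite nth_k; lia.
by have := leq_nth_gapseq lt_ik lt_k; rewrite nth_k; lia.
Qed.

Lemma gapseq_last : 0 < genus G ->
  nth 0 (gapseq G) (genus G).-1 = frobenius G.
Proof.
move=> g_gt0; have FG : frobenius G \in G.
  by apply: frobenius_mem; apply: contraTneq g_gt0 => ->.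
have Fl : frobenius G \in gapseq G by rewrite mem_gapseq.
have nth_k := nth_index 0 Fl; set k := index _ _ in nth_k.
have le_k : k <= (genus G).-1.
  by have := index_mem (frobenius G) (gapseq G); rewrite Fl size_gapseq; lia.
have lt_g : (genus G).-1 < genus G by rewrite ltn_predL.
apply/eqP; rewrite eqn_leq frobenius_max ?nth_gapseq_mem //=.
by rewrite -{1}nth_k leq_nth_gapseq.
Qed.

Hypothesis gapsetG : is_gapset G.

Lemma gapset_gt0 x : x \in G -> 0 < x.
Proof. exact: gapsetG.1. Qed.

Lemma gapset_addn_notin x y : 0 < x -> 0 < y ->
  x \notin G -> y \notin G -> x + y \notin G.
Proof.
move=> x_gt0 y_gt0 xG yG; apply/negP => /(gapsetG.2 x y x_gt0 y_gt0).
by rewrite (negbTE xG) (negbTE yG).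
Qed.

Lemma frobenius_subn_notin x : symmetric_gapset G ->
  x \in G -> x < frobenius G -> frobenius G - x \notin G.
Proof.
move=> symG xG lt_xF; set F := frobenius G.
have FG : F \in G by apply: frobenius_mem; apply: contraTneq xG => ->.
set s := iota 1 F.-1; set P := fun y => F - y \in G.
have genus_s : genus G = (count (mem G) s).+1.
  have iotaF : iota 1 F = s ++ [:: F].
    by rewrite -{1}(_ : F.-1 + 1 = F) ?iotaD; [congr (_ ++ [:: _]) | ]; lia.
  rewrite (@genus_count F) ?iotaF ?count_cat /= ?FG ?addn1 // => y yG.
  by rewrite gapset_gt0 ?frobenius_max.
have cover_s : count (predU (mem G) P) s = size s.
  apply/eqP; rewrite -all_count; apply/allP => y; rewrite mem_iota => y_s.
  by apply: gapsetG.2; rewrite ?subnKC //; lia.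
apply/negP => FxG.
have : 0 < count (predI (mem G) P) s.
  rewrite -has_count; apply/hasP; exists x; last exact/andP.
  by rewrite mem_iota; have := gapset_gt0 xG; lia.
have := count_predUI (mem G) P s.
rewrite cover_s count_iota_reflect size_iota.
rewrite /symmetric_gapset -/F in symG.
(* The counts occur with different elaborations of their predicates; naming
   them lets lia identify the occurrences. *)
set c := count (mem G) s in genus_s *; set d := count (predI _ _) s; lia.
Qed.

Lemma gapseq_step_le_multiplicity i : i.+1 < genus G ->
  nth 0 (gapseq G) i.+1 - nth 0 (gapseq G) i <= multiplicity G.
Proof.
move=> lt_i; have [m_gt0 m_gap _] := multiplicityP.
have := ltn_nth_gapseq (ltnSn i) lt_i; have := nth_gapseq_mem lt_i.
set a := nth 0 _ i; set b := nth 0 _ i.+1; set m := multiplicity G => bG lt_ab.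
rewrite leqNgt; apply/negP => lt_m.
have bm_gap : b - m \notin G by apply: (gapseq_between lt_i); lia.
have := gapset_addn_notin (_ : 0 < b - m) m_gt0 bm_gap m_gap.
by rewrite subnK ?bG //; lia.
Qed.

Lemma multiplicity_le_last_step : symmetric_gapset G -> 1 < genus G ->
  multiplicity G <= frobenius G - nth 0 (gapseq G) (genus G).-2.
Proof.
move=> symG g_gt1; have [_ _ m_min] := multiplicityP.
have aG : nth 0 (gapseq G) (genus G).-2 \in G by apply: nth_gapseq_mem; lia.
have lt_aF : nth 0 (gapseq G) (genus G).-2 < frobenius G.
  by rewrite -gapseq_last; [apply: ltn_nth_gapseq | ]; lia.
apply: contraLR (frobenius_subn_notin symG aG lt_aF).
by rewrite -ltnNge negbK => lt_m; apply: m_min; lia.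
Qed.

Lemma multiplicity_pure_sparse_symmetric k : symmetric_gapset G ->
  pure_sparse k G -> 1 < genus G -> multiplicity G = k.
Proof.
move=> symG [steps_le [i [lt_i step_i]]] g_gt1.
apply/eqP; rewrite eqn_leq; apply/andP; split.
  apply: leq_trans (multiplicity_le_last_step symG g_gt1) _.
  rewrite -gapseq_last; last lia.
  have -> : (genus G).-1 = (genus G).-2.+1 by lia.
  by apply: steps_le; rewrite size_gapseq; lia.
by rewrite -step_i gapseq_step_le_multiplicity // -size_gapseq.
Qed.

Lemma multiplicity_succ_notin :
  (multiplicity G).+1 \notin G -> (3 * multiplicity G).+1 \notin G.
Proof.
have [m_gt0 m_gap _] := multiplicityP; set m := multiplicity G => m1_gap.
have -> : (3 * m).+1 = m + (m + m.+1) by lia.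
apply: (gapset_addn_notin m_gt0 _ m_gap); first lia.
exact: (gapset_addn_notin m_gt0 (ltn0Sn m) m_gap m1_gap).
Qed.

End Gapset.

Theorem mainTheorem10 (n : nat) (G : seq nat) :
  0 < n ->
  is_gapset G ->
  symmetric_gapset G ->
  pure_sparse (2 * n) G ->
  genus G = 3 * n + 1 ->
  (multiplicity G).+1 \in G.
Proof.
move=> n_gt0 gapsetG symG sparseG genusG.
have m_eq : multiplicity G = 2 * n.
  by apply: multiplicity_pure_sparse_symmetric; rewrite ?genusG //; lia.
have FG : frobenius G \in G.
  apply: frobenius_mem; apply/eqP => G0.
  by move: genusG; rewrite G0 /genus /=; lia.
have F_eq : frobenius G = (3 * multiplicity G).+1.
  by rewrite symG genusG m_eq; lia.
by apply: contraLR FG; rewrite F_eq; exact: multiplicity_succ_notin.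
Qed.
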